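(* Let $b\ge 2$ and $\ell\ge 1$ be integers, $m=b^{\ell+1}$, let $S=S_\ell:(\mathbb{Z}/m\mathbb{Z})^{\times}\to\mathbb{R}$ be the collision deviation and $S^{\circ}$ its centered version (see context). Then for every Dirichlet character $\chi$ modulo $m$ that is even, i.e. $\chi(-1)=1$, \[ \hat{S}^{\circ}(\chi)=\frac{1}{\phi(m)}\sum_{a\in(\mathbb{Z}/m\mathbb{Z})^{\times}} S^{\circ}(a)\,\overline{\chi}(a)=0 . \]
   Context: The collision deviation $S_\ell(p)$ is a real-valued invariant of primes $p$ with $\gcd(p,b)=1$, introduced in a companion paper; it depends only on $p\bmod m$, $m=b^{\ell+1}$, so it is regarded as a function $S$ on $(\mathbb{Z}/m\mathbb{Z})^{\times}$. It satisfies the reflection identity $S(a)+S(m-a)=-1$ for every unit $a$ mod $m$ (established in the companion paper, taken as given). For a unit $a$ mod $m$, its spectral class is $R(a)=(a-1)\bmod b\in\{0,\dots,b-1\}$ (well defined since $b\mid m$). For each spectral class $R$ attained by some unit, $\overline{S}_R$ denotes the average of $S$ over all units $a\in(\mathbb{Z}/m\mathbb{Z})^{\times}$ with $R(a)=R$. The centered collision deviation is $S^{\circ}(a)=S(a)-\overline{S}_{R(a)}$, and its transform is $\hat{S}^{\circ}(\chi)=\frac{1}{\phi(m)}\sum_a S^{\circ}(a)\overline{\chi}(a)$. *)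

From HB Require Import structures.
From mathcomp Require Import all_boot all_order all_algebra.
From mathcomp Require Import complex.
Set Implicit Arguments. Unset Strict Implicit. Unset Printing Implicit Defensive.
Import Order.TTheory GRing.Theory Num.Theory.
Local Open Scope ring_scope.

(* Residues mod m are represented by naturals 0 <= a < m; the units of
   Z/mZ are the a < m with coprime a m. *)

(* spectral class R(a) = (a - 1) mod b  (a >= 1 for every unit since m >= 2) *)
Definition spec_class (b a : nat) : nat := ((a - 1) %% b)%N.

Definition Sbar (R : rcfType) (S : nat -> R) (b m r : nat) : R :=
  (\sum_(a < m | coprime a m && (spec_class b a == r)) S a)
  / (#|[set a : 'I_m | coprime a m && (spec_class b a == r)]|)%:R.

Definition Scirc (R : rcfType) (S : nat -> R) (b m a : nat) : R :=
  S a - Sbar S b m (spec_class b a).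

Definition dirichlet_char (C : nzRingType) (m : nat) (chi : nat -> C) : Prop :=
  [/\ forall n, chi (n + m)%N = chi n,
      forall x y, chi (x * y)%N = chi x * chi y,
      chi 1%N = 1
    & forall n, chi n = 0 <-> ~~ coprime n m].

Definition Scirc_hat (R : rcfType) (S : nat -> R) (b m : nat)
    (chi : nat -> R[i]) : R[i] :=
  ((totient m)%:R)^-1 *
  \sum_(a < m | coprime a m) (((Scirc S b m a)%:C)%C * Num.conj (chi a)).

From HB Require Import structures.
From mathcomp Require Import all_boot all_order all_algebra.
From mathcomp Require Import complex.
From mathcomp Require Import zify ring.
Import Order.TTheory GRing.Theory Num.Theory.
Local Open Scope ring_scope.

(* The reflection a |-> m - a is an involution of the units mod m.  It maps
   the spectral class of a bijectively onto that of m - a, so the reflection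
   identity S(a) + S(m - a) = -1 passes to the class averages and S° is odd
   under the reflection.  An even character is invariant under it, hence the
   transform equals its own opposite and vanishes. *)

Lemma coprime_subnl (m a : nat) : (a <= m)%N -> coprime (m - a) m = coprime a m.
Proof.
move=> le_am; rewrite /coprime -{2}(subnK le_am) gcdnDl.
by rewrite -{2}(subnK le_am) gcdnDr gcdnC.
Qed.

Lemma coprime_gt0 {m a : nat} : (1 < m)%N -> coprime a m -> (0 < a)%N.
Proof. by case: a => // m_gt1; rewrite /coprime gcd0n => /eqP; lia. Qed.

Lemma spec_class_subn_eq (b m x y : nat) :
    (0 < x < m)%N -> (0 < y < m)%N ->
  (spec_class b (m - x) == spec_class b (m - y)) = (spec_class b x == spec_class b y).
Proof.
move=> /andP[x_gt0 x_ltm] /andP[y_gt0 y_ltm]; rewrite /spec_class.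
change ((m - x - 1 == m - y - 1 %[mod b]) = (x - 1 == y - 1 %[mod b]))%N.
rewrite -(eqn_modDr (y - 1)).
have -> : (m - y - 1 + (y - 1) = m - x - 1 + (x - 1))%N by lia.
by rewrite eqn_modDl.
Qed.

Section Reflection.

Context {m : nat}.
Hypothesis m_gt1 : (1 < m)%N.

Definition ord_opp (a : 'I_m) : 'I_m := Ordinal (ltn_pmod (m - a) (ltnW m_gt1)).

Lemma ord_oppE (a : 'I_m) : (0 < a)%N -> ord_opp a = (m - a)%N :> nat.
Proof. by move=> a_gt0 /=; rewrite modn_small //; have := ltn_ord a; lia. Qed.

Lemma ord_opp0 (a : 'I_m) : a = 0%N :> nat -> ord_opp a = a.
Proof. by move=> a0; apply: ord_inj; rewrite /= a0 subn0 modnn. Qed.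

Lemma ord_oppK : involutive ord_opp.
Proof.
move=> a; have [a0|a_gt0] := posnP a; first by rewrite !ord_opp0.
have a_ltm := ltn_ord a; have opp_a := ord_oppE a a_gt0.
by apply: ord_inj; rewrite ord_oppE opp_a ?subKn //; lia.
Qed.

Lemma big_units_opp (T : Type) (idx : T) (op : Monoid.com_law idx)
    (P : pred nat) (F : 'I_m -> T) :
  \big[op/idx]_(a < m | coprime a m && P a) F a
  = \big[op/idx]_(a < m | coprime a m && P (m - a)%N) F (ord_opp a).
Proof.
rewrite (reindex_inj (inv_inj ord_oppK)); apply: eq_bigl => a.
have [a0|a_gt0] := posnP a.
  by rewrite ord_opp0 // a0 /coprime gcd0n (gtn_eqF m_gt1).
by rewrite ord_oppE // coprime_subnl //; have := ltn_ord a; lia.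
Qed.

Lemma big_spec_class_opp (T : Type) (idx : T) (op : Monoid.com_law idx)
    (b : nat) (a : 'I_m) (F : 'I_m -> T) :
    coprime a m ->
  \big[op/idx]_(x < m | coprime x m && (spec_class b x == spec_class b (m - a)))
    F x
  = \big[op/idx]_(x < m | coprime x m && (spec_class b x == spec_class b a))
      F (ord_opp x).
Proof.
move=> a_unit.
rewrite (big_units_opp _ _ op (fun x => spec_class b x == spec_class b (m - a))).
apply: eq_bigl => x; apply: andb_id2l => x_unit.
by rewrite spec_class_subn_eq ?ltn_ord ?andbT ?(coprime_gt0 m_gt1 x_unit)
  ?(coprime_gt0 m_gt1 a_unit).
Qed.

Lemma sum_units_odd_eq0 (V : numDomainType) (F : 'I_m -> V) :
    (forall a : 'I_m, coprime a m -> F (ord_opp a) = - F a) ->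
  \sum_(a < m | coprime a m) F a = 0.
Proof.
move=> F_odd; set T := \sum_(a < m | _) _.
have T_opp : T = - T.
  rewrite -sumrN /T -(eq_bigl _ _ (fun a => andbT _)).
  rewrite (big_units_opp _ _ _ xpredT).
  by apply: eq_big => [a|a /andP[a_unit _]]; rewrite ?andbT ?F_odd.
have : T *+ 2 == 0 by rewrite mulr2n {2}T_opp subrr.
by rewrite mulrn_eq0 => /eqP.
Qed.

End Reflection.

Section CenteredDeviation.

Variables (R : rcfType) (S : nat -> R) (b m : nat).
Hypothesis m_gt1 : (1 < m)%N.
Hypothesis S_refl :
  forall a : nat, (a < m)%N -> coprime a m -> S a + S (m - a)%N = -1.

Lemma S_subn (a : 'I_m) : coprime a m -> S (m - a)%N = -1 - S a.
Proof. by move=> a_unit; rewrite -(S_refl _ (ltn_ord a) a_unit) addrC addKr. Qed.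

Lemma Sbar_subn (a : 'I_m) : coprime a m ->
  Sbar S b m (spec_class b (m - a)) = -1 - Sbar S b m (spec_class b a).
Proof.
move=> a_unit; rewrite /Sbar.
have card_class r : #|[set x : 'I_m | coprime x m && (spec_class b x == r)]|%:R
    = \sum_(x < m | coprime x m && (spec_class b x == r)) (1 : R).
  by rewrite sumr_const; congr (_%:R); apply: eq_card => x; rewrite inE.
rewrite !card_class !(big_spec_class_opp m_gt1 _ _ _ b a _ a_unit).
set N := \sum_(x < m | _) 1.
have N_neq0 : N != 0.
  rewrite /N -card_class pnatr_eq0 -lt0n card_gt0; apply/set0Pn; exists a.
  by rewrite inE a_unit eqxx.
rewrite (eq_bigr (fun x : 'I_m => -1 - S x)) => [|x /andP[x_unit _]]; last first.
  by rewrite ord_oppE ?S_subn ?(coprime_gt0 m_gt1).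
by rewrite sumrB sumrN -/N; field.
Qed.

Lemma Scirc_subn (a : 'I_m) : coprime a m ->
  Scirc S b m (m - a) = - Scirc S b m a.
Proof. by move=> a_unit; rewrite /Scirc Sbar_subn // S_subn //; ring. Qed.

End CenteredDeviation.

Lemma dirichlet_char_addMn {C : nzRingType} {m : nat} {chi : nat -> C} :
  dirichlet_char m chi -> forall k n, chi (n + k * m)%N = chi n.
Proof.
case=> chi_per _ _ _; elim=> [|k IHk] n; first by rewrite mul0n addn0.
by rewrite mulSn addnCA addnC chi_per IHk.
Qed.

Lemma even_char_subn (C : nzRingType) (m : nat) (chi : nat -> C) (a : nat) :
    dirichlet_char m chi -> chi (m - 1)%N = 1 ->
  (0 < a <= m)%N -> chi (m - a)%N = chi a.
Proof.
move=> chi_char chi_even /andP[a_gt0 a_lem].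
rewrite -(dirichlet_char_addMn chi_char (a - 1)).
have -> : ((m - a) + (a - 1) * m = (m - 1) * a)%N by nia.
by case: chi_char => _ chiM _ _; rewrite chiM chi_even mul1r.
Qed.

Theorem mainTheorem2 (R : rcfType) (b l : nat) (S : nat -> R)
  (hb : (2 <= b)%N) (hl : (1 <= l)%N)
  (hrefl : forall a : nat, (a < b ^ l.+1)%N -> coprime a (b ^ l.+1) ->
             S a + S (b ^ l.+1 - a)%N = -1)
  (chi : nat -> R[i])
  (hchi : dirichlet_char (b ^ l.+1) chi)
  (heven : chi (b ^ l.+1 - 1)%N = 1) :
  Scirc_hat S b (b ^ l.+1) chi = 0.
Proof.
have m_gt1 : (1 < b ^ l.+1)%N := leq_ltn_trans (ltn0Sn l) (ltn_expl l.+1 hb).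
rewrite /Scirc_hat (sum_units_odd_eq0 m_gt1) ?mulr0 // => a a_unit.
have a_gt0 := coprime_gt0 m_gt1 a_unit.
rewrite ord_oppE // Scirc_subn // even_char_subn ?a_gt0 ?(ltnW (ltn_ord a)) //.
by rewrite rmorphN mulNr.
Qed.
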